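(* If $A\in\mathbb{R}^{n\times n}$ is almost semimonotone, then $A$ is not a Karamardian matrix.
   Context: $A$ is semimonotone if for every $x$ with $0\ne x\ge 0$ there is an index $k$ with $x_k>0$ and $(Ax)_k\ge 0$. $A$ is almost semimonotone if every proper principal submatrix of $A$ is semimonotone but $A$ itself is not semimonotone. For $M\in\mathbb{R}^{n\times n}$ let $K_M=\mathbb{R}^n_+\cap R(M)$ and $K_M^*=\{y: x^Ty\ge 0\ \forall x\in K_M\}$ (one has $K_M^*=\mathbb{R}^n_++N(M^T)$, with interior $\{a+b: a>0,\ b\in N(M^T)\}$). For $q$, LCP$(M,K_M,q)$ is to find $x\in K_M$ with $Mx+q\in K_M^*$ and $x^T(Mx+q)=0$. $M$ is a Karamardian matrix if $K_M\ne\{0\}$ and there exists $d$ in the interior of $K_M^*$ such that both LCP$(M,K_M,0)$ and LCP$(M,K_M,d)$ have $x=0$ as their only solution. *)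

From HB Require Import structures.
From mathcomp Require Import all_boot all_order all_algebra.
From mathcomp Require Import reals.
Set Implicit Arguments. Unset Strict Implicit. Unset Printing Implicit Defensive.
Import Order.TTheory GRing.Theory Num.Theory.
Local Open Scope ring_scope.

Section Defs.
Variable R : realType.

Definition nonneg_vec n (x : 'cV[R]_n) : Prop := forall i, 0 <= x i 0.
Definition pos_vec n (x : 'cV[R]_n) : Prop := forall i, 0 < x i 0.

Definition semimonotone n (A : 'M[R]_n) : Prop :=
  forall x : 'cV[R]_n, nonneg_vec x -> x != 0 ->
    exists k, 0 < x k 0 /\ 0 <= (A *m x) k 0.

Definition principal_submx n (A : 'M[R]_n) (S : {set 'I_n}) : 'M[R]_#|S| :=
  \matrix_(i, j) A (enum_val i) (enum_val j).

Definition almost_semimonotone n (A : 'M[R]_n) : Prop :=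
  (forall S : {set 'I_n}, S \proper [set: 'I_n] -> semimonotone (principal_submx A S))
  /\ ~ semimonotone A.

Definition K_M n (M : 'M[R]_n) (x : 'cV[R]_n) : Prop :=
  nonneg_vec x /\ exists y : 'cV[R]_n, x = M *m y.

Definition K_M_dual n (M : 'M[R]_n) (y : 'cV[R]_n) : Prop :=
  forall x, K_M M x -> 0 <= (x^T *m y) 0 0.

(* interior of K_M^*, = { a + b : a > 0, b in N(M^T) } as stated in the paper *)
Definition K_M_dual_int n (M : 'M[R]_n) (d : 'cV[R]_n) : Prop :=
  exists a b : 'cV[R]_n, pos_vec a /\ M^T *m b = 0 /\ d = a + b.

Definition LCP_sol n (M : 'M[R]_n) (q x : 'cV[R]_n) : Prop :=
  K_M M x /\ K_M_dual M (M *m x + q) /\ (x^T *m (M *m x + q)) 0 0 = 0.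

Definition karamardian n (M : 'M[R]_n) : Prop :=
  (exists x, K_M M x /\ x != 0) /\
  exists d, K_M_dual_int M d /\
    (forall x, LCP_sol M 0 x -> x = 0) /\
    (forall x, LCP_sol M d x -> x = 0).

End Defs.

(** If [A] is not semimonotone there is a nonzero [x >= 0] with [(A x)_k < 0]
    wherever [x_k > 0]; when every proper principal submatrix is semimonotone,
    restricting [x] to its support shows that such an [x] must be positive.
    Sliding along a segment from such an [x] then shows that every [y] with
    [A y < 0] is positive, which forces [A] to be invertible.  For [d = a + b]
    in the interior of [K_A^*], the vector [z = - A^-1 a] is therefore positive,
    lies in the range of [A], and [A z + d = b] is orthogonal to [K_A]: [z] is a
    nonzero solution of LCP(A, K_A, d). *)
From HB Require Import structures.
From mathcomp Require Import all_boot all_order all_algebra.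
From mathcomp Require Import reals.
From Stdlib Require Import Classical.
From mathcomp Require Import lra.
Set Implicit Arguments. Unset Strict Implicit. Unset Printing Implicit Defensive.
Import Order.TTheory GRing.Theory Num.Theory.
Local Open Scope ring_scope.

Section AlmostSemimonotone.
Variable R : realType.

Definition neg_vec n (x : 'cV[R]_n) : Prop := forall i, x i 0 < 0.

Definition sign_reversing n (A : 'M[R]_n) (x : 'cV[R]_n) : Prop :=
  [/\ nonneg_vec x, x != 0 & forall k, 0 < x k 0 -> (A *m x) k 0 < 0].

Lemma not_semimonotone_sign_reversing n (A : 'M[R]_n) :
  ~ semimonotone A -> exists x, sign_reversing A x.
Proof.
move=> nsA; apply: NNPP => no_x; apply: nsA => x x_ge0 x_neq0.
apply: NNPP => no_k; apply: no_x; exists x; split=> // k xk_gt0.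
by rewrite ltNge; apply/negP => Axk_ge0; apply: no_k; exists k.
Qed.

Lemma mulmx_principal_submx n (A : 'M[R]_n) (S : {set 'I_n}) (y : 'cV[R]_n) k :
  (forall j, j \notin S -> y j 0 = 0) ->
  (principal_submx A S *m rowsub enum_val y) k 0 = (A *m y) (enum_val k) 0.
Proof.
move=> y_supp; rewrite !mxE [RHS](bigID (mem S)) /=.
rewrite [X in _ = _ + X]big1 ?addr0 => [|j /y_supp ->]; last by rewrite mulr0.
by rewrite [RHS]big_enum_val; apply: eq_bigr => j _; rewrite !mxE.
Qed.

Lemma rowsub_enum_val_eq0 n (S : {set 'I_n}) (y : 'cV[R]_n) :
  (forall j, j \notin S -> y j 0 = 0) ->
  rowsub enum_val y = 0 :> 'cV[R]_#|S| -> y = 0.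
Proof.
move=> y_supp /matrixP ys0; apply/matrixP => j q; rewrite ord1 mxE.
have [jS | /y_supp //] := boolP (j \in S).
by have := ys0 (enum_rank_in jS j) 0; rewrite !mxE enum_rankK_in.
Qed.

Lemma segment_boundary n (x y : 'cV[R]_n) : pos_vec x -> ~ pos_vec y ->
  exists t : R, [/\ 0 < t <= 1, nonneg_vec (x + t *: (y - x))
                  & exists j, (x + t *: (y - x)) j 0 = 0].
Proof.
move=> x_gt0 y_not_gt0.
have [i0 yi0_le0] : exists i, y i 0 <= 0.
  apply: NNPP => no_i; apply: y_not_gt0 => i; rewrite ltNge.
  by apply/negP => yi_le0; apply: no_i; exists i.
pose F i := x i 0 / (x i 0 - y i 0).
have decr_i0 : y i0 0 < x i0 0 by apply: le_lt_trans yi0_le0 (x_gt0 i0).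
(* [F i] is the exit time of the i-th coordinate; take the first one. *)
have [j decr_j F_min] := @arg_minP _ _ _ i0 (fun i => y i 0 < x i 0) F decr_i0.
set t := F j.
have dj_gt0 : 0 < x j 0 - y j 0 by rewrite subr_gt0.
have t_gt0 : 0 < t by rewrite divr_gt0.
have t_le1 : t <= 1.
  apply: le_trans (F_min _ decr_i0) _.
  by have := x_gt0 i0; rewrite ler_pdivrMr ?subr_gt0 // mul1r; lra.
have zE k : (x + t *: (y - x)) k 0 = x k 0 + t * (y k 0 - x k 0).
  by rewrite !mxE.
exists t; split; first by rewrite t_gt0.
- move=> k; rewrite zE; have := x_gt0 k.
  have [decr_k | ] := ltrP (y k 0) (x k 0); last by nra.
  by have := F_min _ decr_k; rewrite -/t ler_pdivlMr ?subr_gt0 //; nra.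
- exists j; rewrite zE.
  have : t * (x j 0 - y j 0) = x j 0 by rewrite divfK ?gt_eqF.
  lra.
Qed.

Lemma neg_vec_mulmx_segment n (A : 'M[R]_n) (x y : 'cV[R]_n) (t : R) :
  0 < t <= 1 -> neg_vec (A *m x) -> neg_vec (A *m y) ->
  neg_vec (A *m (x + t *: (y - x))).
Proof.
move=> /andP[t_gt0 t_le1] Ax_lt0 Ay_lt0 k.
rewrite mulmxDr -scalemxAr mulmxBr.
move: (A *m x) (A *m y) (Ax_lt0 k) (Ay_lt0 k) => Ax Ay Axk_lt0 Ayk_lt0.
rewrite !mxE; nra.
Qed.

Variables (n : nat) (A : 'M[R]_n).
Hypothesis principal_semimonotone : forall S : {set 'I_n},
  S \proper [set: 'I_n] -> semimonotone (principal_submx A S).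

Lemma sign_reversing_pos y : sign_reversing A y -> pos_vec y.
Proof.
move=> [y_ge0 y_neq0 Ay_lt0] i; apply: NNPP => yi_not_gt0.
pose S := [set k | 0 < y k 0].
have y_supp j : j \notin S -> y j 0 = 0.
  by rewrite inE => yj_not_gt0; apply/le_anti; rewrite y_ge0 leNgt yj_not_gt0.
have S_proper : S \proper [set: 'I_n].
  rewrite properT; apply/eqP => S_full; apply: yi_not_gt0.
  have : i \in S by rewrite S_full inE.
  by rewrite inE.
have ys_ge0 : nonneg_vec (rowsub enum_val y : 'cV_#|S|) by move=> k; rewrite mxE.
have ys_neq0 : rowsub enum_val y != 0 :> 'cV_#|S|.
  by apply: contra_neq y_neq0; apply: rowsub_enum_val_eq0.
have [k [yk_gt0 Ayk_ge0]] := principal_semimonotone S_proper ys_ge0 ys_neq0.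
rewrite mulmx_principal_submx // in Ayk_ge0; rewrite mxE in yk_gt0.
by have := Ay_lt0 _ yk_gt0; rewrite ltNge Ayk_ge0.
Qed.

Variable x : 'cV[R]_n.
Hypotheses (x_gt0 : pos_vec x) (Ax_lt0 : neg_vec (A *m x)).

Lemma neg_image_pos y : neg_vec (A *m y) -> pos_vec y.
Proof.
move=> Ay_lt0; apply: NNPP => y_not_gt0.
have [t [t01 z_ge0 [j zj0]]] := segment_boundary x_gt0 y_not_gt0.
have Az_lt0 := neg_vec_mulmx_segment t01 Ax_lt0 Ay_lt0.
have z_neq0 : x + t *: (y - x) != 0.
  by apply: contraTneq (Az_lt0 j) => ->; rewrite mulmx0 mxE ltxx.
have z_gt0 := sign_reversing_pos (And3 z_ge0 z_neq0 (fun k _ => Az_lt0 k)).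
by have := z_gt0 j; rewrite zj0 ltxx.
Qed.

(* Subtracting a suitable multiple of a kernel vector from [x] would keep
   [A x] but make a coordinate negative. *)
Lemma neg_image_unitmx : A \in unitmx.
Proof.
rewrite unitmxE unitfE -det_tr; apply/negP => /det0P[w w_neq0 wA0].
have Av0 : A *m w^T = 0 by rewrite -[A]trmxK -trmx_mul wA0 trmx0.
have [i wi_neq0] : exists i, w^T i 0 != 0 by apply/cV0Pn; rewrite trmx_eq0.
pose y := x - ((x i 0 + 1) / w^T i 0) *: w^T.
have Ay_lt0 : neg_vec (A *m y) by rewrite /y mulmxBr -scalemxAr Av0 scaler0 subr0.
have := neg_image_pos Ay_lt0 i.
move: wi_neq0; rewrite /y !mxE => wi_neq0; rewrite divfK //; lra.
Qed.

End AlmostSemimonotone.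

Lemma K_M_orthogonal_kernel (R : realType) n (M : 'M[R]_n) (w b : 'cV[R]_n) :
  K_M M w -> M^T *m b = 0 -> (w^T *m b) 0 0 = 0.
Proof. by move=> [_ [y ->]] Mb0; rewrite trmx_mul -mulmxA Mb0 mulmx0 mxE. Qed.

Lemma LCP_sol_kernel (R : realType) n (M : 'M[R]_n) (q z : 'cV[R]_n) :
  K_M M z -> M^T *m (M *m z + q) = 0 -> LCP_sol M q z.
Proof.
move=> Kz w_ker; split; last split; last exact: K_M_orthogonal_kernel w_ker.
- exact: Kz.
- by move=> w Kw; rewrite (K_M_orthogonal_kernel Kw w_ker).
Qed.

Theorem mainTheorem15 (R : realType) (n : nat) (A : 'M[R]_n) :
  almost_semimonotone A -> ~ karamardian A.
Proof.
move=> [principal_sm not_sm] [_ [d [[a [b [a_gt0 [Ab0 ->]]]] [_ LCP_d_trivial]]]].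
have [x x_rev] := not_semimonotone_sign_reversing not_sm.
have x_gt0 := sign_reversing_pos principal_sm x_rev.
have [_ x_neq0 Ax_lt0_on_supp] := x_rev.
have Ax_lt0 : neg_vec (A *m x) := fun k => Ax_lt0_on_supp k (x_gt0 k).
have A_unit := neg_image_unitmx principal_sm x_gt0 Ax_lt0.
pose z := - (invmx A *m a).
have Az : A *m z = - a by rewrite /z mulmxN mulKVmx.
have z_gt0 : pos_vec z.
  by apply: (neg_image_pos principal_sm x_gt0 Ax_lt0) => k; rewrite Az mxE oppr_lt0.
have Kz : K_M A z.
  by split=> [k | ]; [apply: ltW | exists (invmx A *m z); rewrite mulKVmx].
have z_sol : LCP_sol A (a + b) z by apply: LCP_sol_kernel; rewrite // Az addKr.
have [i _] := cV0Pn _ x_neq0.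
by have := z_gt0 i; rewrite (LCP_d_trivial z z_sol) mxE ltxx.
Qed.
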